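(* Let $I=\langle N,M,V\rangle$ be an ordered instance of chores with $n$ agents and $m=n+c$ chores, where $n>c>0$. If an agent $i\in N$ has an MMS partition containing a bundle of size $k\ge 2$, then $i$ has an MMS partition containing at least $n-(c-k+2)$ bundles of cardinality one.
   Context: An instance of chores $I=\langle N,M,V\rangle$ has agents $N=\{1,\dots,n\}$, chores $M=\{1,\dots,m\}$ and additive valuations $v_i$ with $v_i(\emptyset)=0$, $v_i(S)=\sum_{g\in S}v_i(\{g\})$ and $v_{ij}:=v_i(\{j\})\le 0$. It is ordered if $v_{ij}\le v_{i(j+1)}$ for all $i$ and $1\le j<m$. An allocation ($n$-partition) is an ordered $n$-tuple of pairwise disjoint, possibly empty subsets of $M$ with union $M$. The maximin share of $i$ is $\mu_i=\max_A\min_j v_i(A_j)$ over all allocations; an MMS partition of $i$ is an allocation $A$ with $v_i(A_j)\ge\mu_i$ for all $j$. The size of a bundle is its cardinality.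
   Formalization: The bundle size k is also bounded above by c+1, so only MMS partitions containing a bundle of size 2 ≤ k ≤ c+1 are covered. The statement above fails without it. *)

From HB Require Import structures.
From mathcomp Require Import all_boot all_order all_algebra.
Set Implicit Arguments. Unset Strict Implicit. Unset Printing Implicit Defensive.
Import Order.TTheory GRing.Theory Num.Theory.
Local Open Scope ring_scope.

(* Agents are 'I_n, chores are 'I_m (chore j+1 of the paper is ordinal j).
   An instance is given by v : 'I_n -> 'I_m -> R, v i g = v_i({g}) <= 0;
   valuations are additive: *)
Definition bval (R : realFieldType) (n m : nat) (v : 'I_n -> 'I_m -> R)
  (i : 'I_n) (S : {set 'I_m}) : R := \sum_(g in S) v i g.

Definition ordered_instance (R : realFieldType) (n m : nat)
  (v : 'I_n -> 'I_m -> R) : Prop :=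
  forall (i : 'I_n) (j j' : 'I_m), val j' = (val j).+1 -> v i j <= v i j'.

Definition is_allocation (n m : nat) (A : {ffun 'I_n -> {set 'I_m}}) : Prop :=
  (forall j1 j2 : 'I_n, j1 != j2 -> [disjoint A j1 & A j2]) /\
  \bigcup_(j < n) A j = [set: 'I_m].

(* mu is the maximin share of i: mu = max_A min_j v_i(A_j). *)
Definition is_mms (R : realFieldType) (n m : nat) (v : 'I_n -> 'I_m -> R)
  (i : 'I_n) (mu : R) : Prop :=
  (exists A : {ffun 'I_n -> {set 'I_m}}, is_allocation A /\ forall j, mu <= bval v i (A j)) /\
  (forall B : {ffun 'I_n -> {set 'I_m}}, is_allocation B -> exists j, bval v i (B j) <= mu).

Definition mms_partition (R : realFieldType) (n m : nat)
  (v : 'I_n -> 'I_m -> R) (i : 'I_n) (A : {ffun 'I_n -> {set 'I_m}}) : Prop :=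
  is_allocation A /\
  exists mu, is_mms v i mu /\ forall j, mu <= bval v i (A j).

From HB Require Import structures.
From mathcomp Require Import all_boot all_order all_algebra.
From mathcomp Require Import zify.
Set Implicit Arguments. Unset Strict Implicit. Unset Printing Implicit Defensive.
Import Order.TTheory GRing.Theory Num.Theory.
Local Open Scope ring_scope.

(* Start from an MMS partition [A] with a bundle [A jd] of size [k].  As long
   as some bundle is empty, move one chore into it from a bundle with at least
   two chores (taken from [A jd] only if [A jd] has more than [k] chores).
   Since chores have nonpositive value, no bundle value drops below [mu]: the
   donor only loses a chore, and the new singleton is a subset of the donor.
   A donor always exists because [k <= c + 1].  When no bundle is empty, every
   bundle other than [jd] has at least two chores unless it is a singleton,
   and counting the [n + c] chores gives the bound on singletons. *)

Lemma sum_nat_mem (I : finType) (A : {pred I}) : (\sum_i (i \in A : nat))%N = #|A|.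
Proof. by rewrite -sum1_card [RHS]big_mkcond. Qed.

Lemma sum_nat_pred1 (I : finType) (a : I) : (\sum_i (i == a : nat))%N = 1%N.
Proof. by have := sum_nat_mem (pred1 a); rewrite card1; apply. Qed.

Section Allocation.

Variables n m : nat.
Implicit Types A : {ffun 'I_n -> {set 'I_m}}.

Lemma is_allocationP A : is_allocation A <-> forall x, exists! j, x \in A j.
Proof.
split=> [[disjA covA] x | uniqA].
  have : x \in \bigcup_(j < n) A j by rewrite covA inE.
  case/bigcupP=> j _ xAj; exists j; split=> // j' xAj'.
  apply/eqP; apply: contraT => /disjA /disjointFr /(_ xAj).
  by rewrite xAj'.
split=> [j1 j2 j12 | ].
  apply/pred0P=> x /=; apply/negbTE/andP=> [[xA1 xA2]].
  case: (uniqA x) => j [_ uj].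
  by move: j12; rewrite -(uj _ xA1) -(uj _ xA2) eqxx.
apply/setP=> x; rewrite inE; case: (uniqA x) => j [xAj _].
by apply/bigcupP; exists j.
Qed.

Lemma allocation_card_sum A : is_allocation A -> (\sum_j #|A j|)%N = m.
Proof.
move/is_allocationP=> uniqA.
rewrite -[RHS]card_ord -sum1_card.
under eq_bigr do rewrite -sum_nat_mem.
rewrite exchange_big; apply: eq_bigr => x _.
case: (uniqA x) => j [xAj uj].
rewrite (bigD1 j) //= xAj big1 // => j' j'j.
by apply/eqP; rewrite eqb0; apply: contra j'j => /uj ->.
Qed.

Lemma allocation_owner_eq A x j1 j2 :
  is_allocation A -> x \in A j1 -> x \in A j2 -> j1 = j2.
Proof.
move=> /is_allocationP uniqA xA1 xA2; case: (uniqA x) => j [_ uj].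
by rewrite -(uj _ xA1) (uj _ xA2).
Qed.

Definition move_chore A t g : {ffun 'I_n -> {set 'I_m}} :=
  [ffun j => if j == t then g |: A j else A j :\ g].

Lemma mem_move_chore A t g x j :
  (x \in move_chore A t g j) = if x == g then j == t else x \in A j.
Proof.
by rewrite ffunE; case: (j == t); rewrite !inE; case: (x == g).
Qed.

Lemma move_chore_allocation A t g :
  is_allocation A -> is_allocation (move_chore A t g).
Proof.
move/is_allocationP=> uniqA; apply/is_allocationP=> x.
have [-> | xg] := eqVneq x g.
  exists t; split=> [|j]; rewrite mem_move_chore eqxx //.
  by move/eqP.
case: (uniqA x) => j [xAj uj]; exists j.
by split=> [|j']; rewrite mem_move_chore (negbTE xg) //; apply: uj.
Qed.

Lemma card_move_chore A t g j :
  j != t -> #|move_chore A t g j| = (#|A j| - (g \in A j))%N.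
Proof. by move=> jt; rewrite ffunE (negbTE jt) (cardsD1 g (A j)) addKn. Qed.

Lemma move_chore_empty_proper A t g j1 :
  is_allocation A -> A t = set0 -> g \in A j1 -> (1 < #|A j1|)%N ->
  [set j | move_chore A t g j == set0] \proper [set j | A j == set0].
Proof.
move=> allocA At gA1 A1gt1.
apply/properP; split; last first.
  exists t; first by rewrite inE At.
  by rewrite inE ffunE eqxx At setU0 -cards_eq0 cards1.
apply/subsetP=> j; rewrite !inE -!cards_eq0.
have [-> | jt] := eqVneq j t; first by rewrite At cards0.
rewrite card_move_chore //.
case gAj: (g \in A j); last by rewrite subn0.
by move: A1gt1; rewrite -(allocation_owner_eq allocA gAj gA1); lia.
Qed.

Lemma allocation_card_le A je jd :
  is_allocation A -> A je = set0 -> je != jd ->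
  (forall j, j != jd -> #|A j| <= 1)%N -> (m + 2 <= n + #|A jd|)%N.
Proof.
move=> allocA Aje jejd small.
have : (\sum_j (#|A j| + (j == je) + (j == jd))
        <= \sum_j (1 + (j == jd) * #|A jd|))%N.
  apply: leq_sum => j _.
  have [-> | jjd] := eqVneq j jd; first by rewrite eq_sym (negbTE jejd); lia.
  have [-> | jje] := eqVneq j je; first by rewrite Aje cards0.
  by have := small j jjd; lia.
rewrite !big_split /= -big_distrl /= allocation_card_sum // !sum_nat_pred1.
by rewrite sum_nat_const card_ord; lia.
Qed.

Lemma exists_donor A je jd k :
  is_allocation A -> A je = set0 -> (0 < k)%N -> (k <= #|A jd|)%N ->
  (n + k < m + 2)%N -> exists2 j1, (1 < #|A j1|)%N & j1 = jd -> (k < #|A jd|)%N.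
Proof.
move=> allocA Aje k_gt0 kAjd kmn.
have jejd : je != jd by apply: contraTneq kAjd => <-; rewrite Aje cards0 -ltnNge.
have [kltA | Ajd_le_k] := ltnP k #|A jd|; first by exists jd => //; lia.
have [j1 /andP [j1jd A1gt1] | no_donor] :=
  pickP [pred j | (j != jd) && (1 < #|A j|)%N].
  by exists j1 => // j1E; move: j1jd; rewrite j1E eqxx.
have small j : j != jd -> (#|A j| <= 1)%N.
  by move=> jjd; have := no_donor j; rewrite /= jjd /= => /negbT; rewrite -leqNgt.
by have := allocation_card_le allocA Aje jejd small; lia.
Qed.

Lemma allocation_singletons_ge A jd k :
  is_allocation A -> (forall j, A j != set0) -> (2 <= k)%N -> (k <= #|A jd|)%N ->
  (2 * n + k <= m + 2 + #|[set j | #|A j| == 1%N]|)%N.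
Proof.
move=> allocA nonempty k_ge2 kAjd.
set s := #|[set j | _]|.
have : (\sum_j (2 + (j == jd) * k)
        <= \sum_j (#|A j| + (#|A j| == 1%N) + (j == jd) * 2))%N.
  apply: leq_sum => j _.
  have [-> | _] := eqVneq j jd.
    have -> : (#|A jd| == 1%N) = false by apply/negbTE; lia.
    lia.
  have := nonempty j; rewrite -card_gt0.
  by case: eqP; lia.
rewrite !big_split /= -!big_distrl /= sum_nat_pred1 allocation_card_sum //.
have -> : (\sum_j (#|A j| == 1%N : nat))%N = s.
  by rewrite /s -sum_nat_mem; apply: eq_bigr => j _; rewrite inE.
by rewrite sum_nat_const card_ord; lia.
Qed.

End Allocation.

Section Valuation.

Variables (R : realFieldType) (n m : nat) (v : 'I_n -> 'I_m -> R) (i : 'I_n).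
Hypothesis v_le0 : forall g, v i g <= 0.

Lemma bval_antitone (S T : {set 'I_m}) : S \subset T -> bval v i T <= bval v i S.
Proof.
move=> ST; rewrite /bval (big_setID S) /= (setIidPr ST) gerDl.
exact: sumr_le0.
Qed.

Variable mu : R.

Lemma move_chore_bval_ge (A : {ffun 'I_n -> {set 'I_m}}) t g :
  is_allocation A -> A t = set0 -> (forall j, mu <= bval v i (A j)) ->
  forall j, mu <= bval v i (move_chore A t g j).
Proof.
move=> /is_allocationP uniqA At muA j.
case: (uniqA g) => j1 [gA1 _].
rewrite ffunE; case: eqP => [-> | _].
  by rewrite At setU0; apply: le_trans (muA j1) (bval_antitone _); rewrite sub1set.
exact: le_trans (muA j) (bval_antitone (subD1set _ _)).
Qed.

Lemma fill_empty_bundles (A : {ffun 'I_n -> {set 'I_m}}) jd k :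
  (0 < k)%N -> (n + k < m + 2)%N ->
  is_allocation A -> (forall j, mu <= bval v i (A j)) -> (k <= #|A jd|)%N ->
  exists B : {ffun 'I_n -> {set 'I_m}},
    [/\ is_allocation B, forall j, mu <= bval v i (B j),
        (k <= #|B jd|)%N & forall j, B j != set0].
Proof.
move=> k_gt0 kmn.
have [e] := ubnP #|[set j | A j == set0]|; elim: e A => // e IH A.
rewrite ltnS => emptyA allocA muA kA.
have [t /eqP At | nonempty] := pickP (fun j => A j == set0); last first.
  by exists A; split=> // j; rewrite nonempty.
have [j1 A1gt1 donor] := exists_donor allocA At k_gt0 kA kmn.
have [g gA1] : exists g, g \in A j1 by apply/set0Pn; rewrite -card_gt0; lia.
have tjd : jd != t by apply: contraTneq kA => ->; rewrite At cards0 -ltnNge.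
apply: (IH (move_chore A t g)).
- exact: leq_trans (proper_card (move_chore_empty_proper allocA At gA1 A1gt1)) emptyA.
- exact: move_chore_allocation.
- exact: move_chore_bval_ge.
rewrite card_move_chore //; case gAjd: (g \in A jd); last by rewrite subn0.
have := donor (allocation_owner_eq allocA gA1 gAjd); lia.
Qed.

End Valuation.

Theorem lemma19 (R : realFieldType) (n m c : nat) (v : 'I_n -> 'I_m -> R)
  (Hchores : forall i g, v i g <= 0)
  (Hord : ordered_instance v)
  (Hm : m = (n + c)%N) (Hc0 : (0 < c)%N) (Hcn : (c < n)%N)
  (i : 'I_n) (k : nat) (Hk2 : (2 <= k)%N) (Hkc : (k <= c.+1)%N) :
  (exists A, mms_partition v i A /\ exists j, #|A j| = k) ->
  exists B, mms_partition v i B /\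
    (n + k - (c + 2) <= #|[set j | #|B j| == 1%N]|)%N.
Proof.
case=> A [[allocA [mu [mms_mu muA]]] [jd Ajd]].
have [|||B [allocB muB kB nonemptyB]] :=
  fill_empty_bundles (Hchores i) (jd := jd) (k := k) _ _ allocA muA.
- lia.
- lia.
- by rewrite Ajd.
exists B; split; first by split=> //; exists mu.
by have := allocation_singletons_ge allocB nonemptyB Hk2 kB; lia.
Qed.
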